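(* Let $G$ be a tree with $\ell$ leaves and let $1\leq m\leq \ell$. Then $\mathrm{capt}(G,m)\leq \lceil \mathrm{diam}(G)/2\rceil+(m-1)\,\mathrm{diam}(G)$.
   Context: All graphs are reflexive (a player may stay in place). The game of $k$ cops and $m$ robbers on $G$: in round 0 the cops first choose starting vertices, then the robbers choose theirs. In each round $i\geq 1$, all cops move (each to an adjacent vertex or staying), then all robbers move likewise. Several players may occupy the same vertex. Whenever a cop and some robbers occupy the same vertex, those robbers are captured and take no further part in the game. Both sides have full information. The cops win if all robbers are captured after finitely many rounds. For a cop-win graph $G$ (e.g. a tree), $\mathrm{capt}(G,m)$ is the index of the round in which the last robber is captured when one cop plays to minimize this index and $m$ robbers play to maximize it. $\mathrm{diam}(G)$ is the diameter of $G$. *)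

From mathcomp Require Import all_boot.
Set Implicit Arguments. Unset Strict Implicit. Unset Printing Implicit Defensive.

(* The game is played on the
   reflexive graph: a player may move along an edge or stay put. *)
Section Graph.
Variables (T : finType) (e : rel T).

Definition step (v w : T) : bool := (v == w) || e v w.

Definition connected_graph : Prop := forall x y : T, connect e x y.

Definition acyclic_graph : Prop :=
  forall p : seq T, uniq p -> 2 < size p -> ~~ cycle e p.

Definition is_tree : Prop :=
  [/\ symmetric e, irreflexive e, connected_graph & acyclic_graph].

Definition nleaves : nat := #|[set v : T | #|[set w : T | e v w]| == 1]|.

Definition walk_len (x y : T) (n : nat) : bool :=
  [exists p : n.-tuple T, path e x p && (last x p == y)].

(* graph distance (the least length of a walk); for connected graphs this is
   always < #|T| *)
Definition dist (x y : T) : nat := find (walk_len x y) (iota 0 #|T|).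

Definition diam : nat := \max_(x : T) \max_(y : T) dist x y.

(* Game of one cop against m robbers.  Robber positions: Some v if the robber
   is still in the game at v, None if captured. *)
Definition capture (m : nat) (c : T) (R : {ffun 'I_m -> option T})
  : {ffun 'I_m -> option T} :=
  [ffun i => if R i == Some c then None else R i].

Definition robber_move (m : nat) (R R' : {ffun 'I_m -> option T}) : Prop :=
  forall i, match R i with
            | None => R' i = None
            | Some v => exists w, R' i = Some w /\ step v w
            end.

(* cop_wins n c R : it is the cop's turn, cop at c, robbers at R (captures
   already applied); the cop can force that all robbers are captured within
   n further rounds, whatever the robbers do. *)
Fixpoint cop_wins (m n : nat) (c : T) (R : {ffun 'I_m -> option T}) : Prop :=
  match n with
  | 0 => forall i, R i = None
  | n'.+1 => (forall i, R i = None) \/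
      exists c', step c c' /\
        forall R', robber_move (capture c' R) R' ->
                   cop_wins n' c' (capture c' R')
  end.

(* capt(G,m) <= k : the cop chooses a start vertex, then the m robbers choose
   theirs (round 0); the cop can guarantee that the last robber is captured in
   a round with index <= k. *)
Definition capt_le (m k : nat) : Prop :=
  exists c0 : T, forall r0 : {ffun 'I_m -> T},
    cop_wins k c0 (capture c0 [ffun i => Some (r0 i)]).

End Graph.

From mathcomp Require Import all_boot zify.
Set Implicit Arguments. Unset Strict Implicit. Unset Printing Implicit Defensive.

(* The cop starts at a centre of the tree, whose eccentricity is at most
   ⌈diam/2⌉, and hunts the robbers one at a time, walking towards the chosen
   robber along a geodesic.  Seen from the vertex z where the hunt started, the
   robber stays in the branch below the cop ([between e z c r]): in a tree every
   vertex has a single neighbour closer to z, and the robber can only enter it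
   by stepping onto the cop.  The cop's distance to z grows by one each round,
   so the robber is caught before it exceeds the eccentricity of z; each later
   hunt starts at a capture vertex and thus takes at most diam rounds. *)

Section Distance.
Variables (T : finType) (e : rel T).
Implicit Types (x y z u v c r : T) (p q : seq T).

Definition between x y z : Prop := dist e x z = dist e x y + dist e y z.

Lemma size_uniq_path_lt x p : uniq (x :: p) -> size p < #|T|.
Proof. by move/card_uniqP => /= <-; apply: max_card. Qed.

Lemma walk_len_path x p : path e x p -> walk_len e x (last x p) (size p).
Proof. by move=> ep; apply/existsP; exists (in_tuple p); rewrite /= ep eqxx. Qed.

Lemma dist_le_path x p : path e x p -> dist e x (last x p) <= size p.
Proof.
case/shortenP=> q xq uq sub_q.
apply: leq_trans _ (uniq_leq_size (andP uq).2 sub_q); rewrite leqNgt.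
apply/negP => /(before_find 0).
by rewrite nth_iota ?add0n ?walk_len_path // (size_uniq_path_lt uq).
Qed.

Lemma dist_le_diam x y : dist e x y <= diam e.
Proof.
apply: leq_trans (@leq_bigmax _ (fun y => dist e x y) y) _.
exact: (@leq_bigmax _ (fun x => \max_y dist e x y) x).
Qed.

Lemma diam_attained (x0 : T) : exists u v, dist e u v = diam e.
Proof.
have T_gt0 : 0 < #|T| by apply/card_gt0P; exists x0.
have [u diam_u] := eq_bigmax (fun x => \max_y dist e x y) T_gt0.
have [v max_v] := eq_bigmax (fun y => dist e u y) T_gt0.
by exists u, v; rewrite /diam diam_u max_v.
Qed.

Lemma distxx x : dist e x x = 0.
Proof. by apply/eqP; rewrite -leqn0 (dist_le_path (p := [::]) (x := x)). Qed.

Lemma dist_edge x y : e x y -> dist e x y <= 1.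
Proof. by move=> exy; have := @dist_le_path x [:: y]; rewrite /= exy; apply. Qed.

Section Connected.
Hypothesis e_conn : connected_graph e.

Lemma dist_path x y :
  exists p, [/\ path e x p, last x p = y & size p = dist e x y].
Proof.
have /connectP[p0 /shortenP[p ep up _] ->] := e_conn x y.
have has_walk : has (walk_len e x (last x p)) (iota 0 #|T|).
  apply/hasP; exists (size p); last exact: walk_len_path.
  by rewrite mem_iota (size_uniq_path_lt up).
have := nth_find 0 has_walk; rewrite has_find size_iota in has_walk.
rewrite nth_iota // add0n => /existsP[q /andP[eq /eqP lq]].
by exists q; rewrite size_tuple.
Qed.

Lemma dist_triangle x y z : dist e x z <= dist e x y + dist e y z.
Proof.
have [p [ep <- <-]] := dist_path x y; have [q [yq <- <-]] := dist_path (last x p) z.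
by rewrite -size_cat -(last_cat x p q) dist_le_path // cat_path ep yq.
Qed.

Lemma dist_eq0 x y : dist e x y = 0 -> x = y.
Proof. by have [[|? ?] [_ <- <-]] := dist_path x y. Qed.

Lemma dist_gt0 x y : x != y -> 0 < dist e x y.
Proof. by rewrite lt0n; apply: contra => /eqP/dist_eq0->. Qed.

Lemma dist_first_step x y :
  x != y -> exists2 x', e x x' & dist e x' y = (dist e x y).-1.
Proof.
have [[|a p] [ep <- dp]] := dist_path x y; first by rewrite eqxx.
case/andP: ep => exa ep _; exists a => //; rewrite /= in dp.
apply/eqP; rewrite -dp eqn_leq dist_le_path //=.
by have := dist_triangle x a (last a p); have := dist_edge exa; lia.
Qed.

Lemma dist_last_step x y :
  x != y -> exists2 y', e y' y & dist e x y' = (dist e x y).-1.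
Proof.
have [p [ep <- dp]] := dist_path x y.
case/lastP: p ep dp => [|p a]; first by rewrite eqxx.
rewrite rcons_path last_rcons size_rcons => /andP[ep ea] dp _.
exists (last x p) => //; apply/eqP; rewrite -dp eqn_leq dist_le_path //=.
by have := dist_triangle x (last x p) a; have := dist_edge ea; lia.
Qed.

Lemma between_first_step z c r : between z c r -> c != r ->
  exists c', [/\ e c c', dist e z c' = (dist e z c).+1 & between z c' r].
Proof.
rewrite /between => zcr cr; have [c' cc' dc'] := dist_first_step cr.
exists c'; have := dist_triangle z c c'; have := dist_triangle z c' r.
by have := dist_edge cc'; have := dist_gt0 cr; split => //; lia.
Qed.

Hypothesis e_sym : symmetric e.

Lemma dist_sym x y : dist e y x = dist e x y.
Proof.
suff le_sym a b : dist e b a <= dist e a b by apply/eqP; rewrite eqn_leq !le_sym.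
have [p [ep <- <-]] := dist_path a b.
elim: p a ep => [|w p IH] a /=; first by rewrite distxx.
case/andP=> aw ep; apply: leq_trans (dist_triangle _ w _) _.
by rewrite -addn1 leq_add ?IH // dist_edge // e_sym.
Qed.

Section Tree.
Hypotheses (e_irr : irreflexive e) (e_acyc : acyclic_graph e).

(* Descending one level at both ends of such a path either closes a cycle or
   yields the same configuration one level closer to z. *)
Lemma tree_level_path z k x y q :
  x != y -> dist e z x = k -> dist e z y = k ->
  path e y q -> last y q = x -> uniq (y :: q) ->
  {in q, forall v, (v == x) || (k < dist e z v)} -> False.
Proof.
elim: k x y q => [|k IH] x y q xy zx zy yq lq uq above.
  by move: xy; rewrite -(dist_eq0 zx) -(dist_eq0 zy) eqxx.
have z_ne w : dist e z w = k.+1 -> z != w.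
  by move=> zw; apply/eqP => zw'; rewrite -zw' distxx in zw.
have [x1 x1x] := dist_last_step (z_ne x zx); rewrite zx /= => zx1.
have [y1 y1y] := dist_last_step (z_ne y zy); rewrite zy /= => zy1.
have high w : w \in y :: q -> k < dist e z w.
  by rewrite inE => /predU1P[-> | /above/predU1P[-> | /ltnW]]; rewrite ?zx ?zy.
have low w : dist e z w = k -> w \notin y :: q.
  by move=> zw; apply/negP => /high; rewrite zw ltnn.
have q_nil : q != [::] by apply: contraNneq xy => q0; rewrite -lq q0.
have [x1y1|x1y1] := eqVneq x1 y1.
  rewrite -x1y1 in y1y; apply: (negP (e_acyc (p := x1 :: y :: q) _ _)).
  - by rewrite cons_uniq uq andbT low.
  - by case: q q_nil {yq lq uq above high low}.
  by rewrite /= y1y rcons_path yq lq e_sym x1x.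
apply: (IH x1 y1 (y :: rcons q x1)) => //.
- by rewrite /= y1y rcons_path yq lq e_sym x1x.
- by rewrite /= last_rcons.
- rewrite -rcons_cons cons_uniq rcons_uniq mem_rcons inE negb_or.
  by rewrite eq_sym x1y1 !low.
move=> v; rewrite -rcons_cons mem_rcons inE.
by case/predU1P=> [->|/high->]; rewrite ?eqxx ?orbT.
Qed.

Lemma dist_adj z x y :
  e x y -> dist e z y = (dist e z x).+1 \/ dist e z x = (dist e z y).+1.
Proof.
move=> exy; have xy : x != y by apply: contraTneq exy => ->; rewrite e_irr.
have := dist_triangle z x y; have := dist_triangle z y x.
have := dist_edge exy; rewrite dist_sym => yx.
suff : dist e z x != dist e z y by lia.
apply/eqP => zxy; apply: (@tree_level_path z _ x y [:: x] xy zxy) => //.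
- by rewrite /= e_sym exy.
- by rewrite /= inE eq_sym xy.
by move=> v; rewrite inE => ->.
Qed.

Lemma dist_parent_unique z r a b : e a r -> e b r ->
  dist e z a < dist e z r -> dist e z b < dist e z r -> a = b.
Proof.
move=> ar br za zb; have [//|ab] := eqVneq a b; exfalso.
apply: (@tree_level_path z (dist e z a) a b [:: r; a] ab) => //.
- by case: (dist_adj z ar); case: (dist_adj z br); lia.
- by rewrite /= br e_sym ar.
- have neq_r w : e w r -> w != r by apply: contraTneq => ->; rewrite e_irr.
  by rewrite /= !inE !negb_or (eq_sym b a) (eq_sym r a) ab !neq_r.
by move=> v; rewrite !inE => /predU1P[->|->]; rewrite ?za ?orbT.
Qed.

Lemma between_step z c r r' : between z c r -> r != c -> step e r r' ->
  between z c r'.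
Proof.
rewrite /between => zcr rc /predU1P[<- // | rr'].
have := dist_triangle z c r'; have := dist_triangle c r r'; have := dist_edge rr'.
case: (dist_adj z rr') => [|zr']; first lia.
rewrite eq_sym in rc; have [s sr cs] := dist_last_step rc.
have zs : dist e z s < dist e z r.
  by have := dist_triangle z c s; have := dist_gt0 rc; lia.
have r'r : e r' r by rewrite e_sym.
have <- : s = r' by apply: dist_parent_unique sr r'r zs _; lia.
have := dist_triangle z c s; have := dist_triangle z s r; have := dist_edge sr.
by have := dist_gt0 rc; lia.
Qed.

Lemma between_cover u c v :
  between u c v -> forall x, between u c x \/ between v c x.
Proof.
move=> ucv x; move: {2}(dist e c x) (erefl (dist e c x)) => n.
elim: n x => [|n IH] x cx.
  by left; rewrite /between -(dist_eq0 cx) distxx addn0.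
have cx' : c != x by apply: contraTneq isT => cx'; rewrite -cx' distxx in cx.
have [y yx] := dist_last_step cx'; rewrite cx /= => cy.
have [yc|yc] := eqVneq y c; last first.
  have yx' : step e y x by rewrite /step yx orbT.
  by case: (IH y cy) => cy'; [left | right]; apply: between_step cy' yc yx'.
rewrite yc distxx in yx cy; rewrite /between in ucv *.
case: (dist_adj u yx) => ux; first by left; lia.
case: (dist_adj v yx) => vx; first by right; lia.
have := dist_triangle u x v; rewrite (dist_sym c v) (dist_sym x v) in ucv vx; lia.
Qed.

Lemma exists_center (x0 : T) : exists c, forall x, dist e c x <= uphalf (diam e).
Proof.
have [u [v duv]] := diam_attained x0; have [p [up lp sp]] := dist_path u v.
set h := uphalf (diam e); have h_le : h <= size p by rewrite sp duv; lia.
move: up; rewrite -(cat_take_drop h p) cat_path => /andP[up1 up2].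
set c := last u (take h p) in up2 *.
have := dist_le_path up1; rewrite size_takel // -/c => uc.
have := dist_le_path up2; rewrite -last_cat cat_take_drop lp size_drop -/c => cv.
have ucv : between u c v by rewrite /between; have := dist_triangle u c v; lia.
exists c => x; have := dist_le_diam u x; have := dist_le_diam v x.
have hD : diam e <= h + h by rewrite /h; lia.
by case: (between_cover ucv x); move: ucv; rewrite /between ?(dist_sym c v); lia.
Qed.
End Tree.
End Connected.
End Distance.

Section Game.
Variables (T : finType) (e : rel T) (m : nat).
Implicit Types (c : T) (R : {ffun 'I_m -> option T}).

Definition alive R : nat := #|[set i | R i != None]|.

Definition cop_alone c R : Prop := forall i, R i != Some c.

Lemma cop_wins_alive0 n c R : alive R = 0 -> cop_wins e n c R.
Proof.
move/eqP; rewrite cards_eq0 => /eqP R0.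
have none i : R i = None by apply/eqP; move/setP/(_ i): R0; rewrite !inE => /negbFE.
by case: n => [|n] //=; left.
Qed.

Lemma cop_wins_mono n n' c R : n <= n' -> cop_wins e n c R -> cop_wins e n' c R.
Proof.
elim: n' n c R => [|n' IH] [|n] c R //= le_nn'; first by left.
case=> [R0|[c' [cc' win]]]; [by left | right; exists c'; split=> // R' mv].
exact: IH le_nn' (win R' mv).
Qed.

Lemma cop_alone_capture c R : cop_alone c (capture c R).
Proof. by move=> i; rewrite ffunE; case: ifP => // /negbT. Qed.

Lemma alive_le R R' : (forall i, R i = None -> R' i = None) -> alive R' <= alive R.
Proof.
move=> RR'; apply/subset_leq_card/subsetP => i.
by rewrite !inE; apply: contra => /eqP/RR'->.
Qed.

Lemma alive_lt R R' i : (forall i, R i = None -> R' i = None) ->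
  R i != None -> R' i = None -> alive R' < alive R.
Proof.
move=> RR' Ri R'i; apply/proper_card/properP; split.
  by apply/subsetP => k; rewrite !inE; apply: contra => /eqP/RR'->.
by exists i; rewrite !inE ?R'i.
Qed.

Lemma round_captured c' R R' i : robber_move e (capture c' R) R' ->
  R i = None -> capture c' R' i = None.
Proof. by move=> mv Ri; move: (mv i); rewrite !ffunE Ri /= => ->. Qed.

Lemma round_survivor c' R R' i r' : robber_move e (capture c' R) R' ->
  capture c' R' i = Some r' -> exists r, [/\ R i = Some r, r != c' & step e r r'].
Proof.
move=> mv; rewrite ffunE; case: ifP => // _ R'i; move: (mv i); rewrite ffunE.
case: (R i) => [r|]; last by rewrite R'i.
case: ifP => [_|/negbT rc']; first by rewrite R'i.
by rewrite R'i => -[w [[<-] rw]]; exists r.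
Qed.

Section Strategy.
Hypotheses (e_conn : connected_graph e) (e_sym : symmetric e).
Hypotheses (e_irr : irreflexive e) (e_acyc : acyclic_graph e).

Section Chase.
Variables (z : T) (H N j : nat).
Hypothesis z_ecc : forall x, dist e z x <= H.
Hypothesis wins_fewer :
  forall c R, cop_alone c R -> alive R <= j -> cop_wins e N c R.

Lemma cop_wins_chase t c R i r : dist e z c + t = H -> R i = Some r -> c != r ->
  between e z c r -> alive R <= j.+1 -> cop_wins e (t + N) c R.
Proof.
elim: t c R i r => [|t IH] c R i r zc Ri cr zcr alive_R.
  by have := z_ecc r; have := dist_gt0 e_conn cr; rewrite /between in zcr; lia.
have [c' [cc' zc' zc'r]] := between_first_step e_conn zcr cr.
rewrite addSn /=; right; exists c'; split; first by rewrite /step cc' orbT.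
move=> R' mv; have shrink k : R k = None -> capture c' R' k = None.
  exact: round_captured mv.
case Ri' : (capture c' R' i) => [r'|].
  have [r0 [] ] := round_survivor mv Ri'; rewrite Ri => -[<-] rc' rr'.
  apply: (IH c' (capture c' R') i r') => //; first lia.
  - have := cop_alone_capture c' R' i; rewrite Ri' eq_sym.
    by apply: contra => /eqP->.
  - exact: (between_step e_conn e_sym e_irr e_acyc zc'r rc' rr').
  exact: leq_trans (alive_le shrink) alive_R.
apply: cop_wins_mono (leq_addl _ _) (wins_fewer (cop_alone_capture _ _) _).
by have := alive_lt shrink (i := i); rewrite Ri Ri' => /(_ isT erefl); lia.
Qed.

Lemma cop_wins_from_root R :
  cop_alone z R -> alive R <= j.+1 -> cop_wins e (H + N) z R.
Proof.
move=> alone alive_R; have [/cop_wins_alive0 // | ] := posnP (alive R).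
case/card_gt0P => i; rewrite inE; case Ri: (R i) => [r|] // _.
have zr : z != r by apply: contraNneq (alone i) => ->; rewrite Ri.
by apply: (cop_wins_chase (i := i) (r := r)) => //; rewrite /between distxx.
Qed.

End Chase.

Lemma cop_wins_alive j c R :
  cop_alone c R -> alive R <= j -> cop_wins e (j * diam e) c R.
Proof.
elim: j c R => [|j IH] c R alone alive_R; first by apply: cop_wins_alive0; lia.
by rewrite mulSn; apply: (cop_wins_from_root (@dist_le_diam _ e c) IH).
Qed.

End Strategy.
End Game.

Theorem mainTheorem9 (T : finType) (e : rel T) (m : nat) :
  is_tree e -> 1 <= m <= nleaves e ->
  capt_le e m (uphalf (diam e) + (m - 1) * diam e).
Proof.
case=> e_sym e_irr e_conn e_acyc /andP[m_gt0 m_le].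
(* The leaf count is only needed to know that the tree is nonempty. *)
have /card_gt0P[x0 _] : 0 < nleaves e := leq_trans m_gt0 m_le.
have [c c_ecc] := exists_center e_conn e_sym e_irr e_acyc x0.
have wins_fewer := cop_wins_alive e_conn e_sym e_irr e_acyc (m := m) (j := m - 1).
exists c => r0.
apply: (cop_wins_from_root e_conn e_sym e_irr e_acyc c_ecc wins_fewer).
- exact: cop_alone_capture.
by rewrite subn1 prednK // (leq_trans (max_card _)) ?card_ord.
Qed.
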